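(* Let $G$ be a graph and let $A$ and $B$ be two disjoint sets of vertices of $G$ with $|A|=|B|=t$, such that the vertices of $A$ are pairwise adjacent, the vertices of $B$ are pairwise adjacent, and for any two distinct vertices $w,z$ both in $A$ or both in $B$ we have $d(w,y)=d(z,y)$ for all $y\in V(G)\setminus\{w,z\}$. Then $rvcl(G)\geq t+1$.
   Context: All graphs are finite, simple, connected and undirected; $d$ denotes graph distance. For a graph $G$ and $k\in\mathbb{N}$, a rainbow vertex $k$-coloring of $G$ is a map $c:V(G)\to\{1,\dots,k\}$ such that every two vertices $u,v$ are joined by a path whose internal vertices all receive distinct colors. For such a coloring let $R_i=c^{-1}(i)$ and $\Pi=(R_1,\dots,R_k)$; the rainbow code of $v$ is $rc_\Pi(v)=(d(v,R_1),\dots,d(v,R_k))$ where $d(v,R_i)=\min_{x\in R_i}d(v,x)$. A rainbow vertex $k$-coloring is a locating rainbow $k$-coloring if distinct vertices have distinct rainbow codes. The locating rainbow connection number $rvcl(G)$ is the least $k$ for which $G$ has a locating rainbow $k$-coloring. *)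

From mathcomp Require Import all_boot.
Set Implicit Arguments. Unset Strict Implicit. Unset Printing Implicit Defensive.

Definition simple_graph (T : finType) (e : rel T) : Prop :=
  symmetric e /\ irreflexive e.

Definition connected_graph (T : finType) (e : rel T) : Prop :=
  0 < #|T| /\ forall u v : T, connect e u v.

Fixpoint ball (T : finType) (e : rel T) (n : nat) (u : T) : {set T} :=
  match n with
  | 0 => [set u]
  | n'.+1 => ball e n' u :|: [set y | [exists x in ball e n' u, e x y]]
  end.

(* graph distance d(u,v): least n with v in ball n u (= #|T| if unreachable,
   which never happens in a connected graph). *)
Definition dist (T : finType) (e : rel T) (u v : T) : nat :=
  find (fun n => v \in ball e n u) (iota 0 #|T|).

(* d(v,R) = min_{x in R} d(v,x); empty R gives the sentinel #|T|
   (larger than every actual distance, playing the role of infinity). *)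
Definition dist_set (T : finType) (e : rel T) (v : T) (R : {set T}) : nat :=
  \big[minn/#|T|]_(x in R) dist e v x.

(* a u-v path x0=u, x1, ..., xm=v given as u :: p, internal vertices
   are all but the last element of p *)
Definition is_path (T : finType) (e : rel T) (u v : T) (p : seq T) : bool :=
  [&& path e u p, last u p == v & uniq (u :: p)].

Definition internal (T : Type) (p : seq T) : seq T := take (size p).-1 p.

Definition rainbow_vertex_coloring (T : finType) (e : rel T) (k : nat)
    (c : T -> 'I_k) : Prop :=
  forall u v : T, exists p : seq T,
    is_path e u v p /\ uniq (map c (internal p)).

Definition color_class (T : finType) (k : nat) (c : T -> 'I_k) (i : 'I_k)
  : {set T} := [set x | c x == i].

Definition rainbow_code (T : finType) (e : rel T) (k : nat) (c : T -> 'I_k)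
    (v : T) : {ffun 'I_k -> nat} :=
  [ffun i => dist_set e v (color_class c i)].

Definition locating_rainbow_coloring (T : finType) (e : rel T) (k : nat)
    (c : T -> 'I_k) : Prop :=
  rainbow_vertex_coloring e c /\
  forall u v : T, u != v -> rainbow_code e c u != rainbow_code e c v.

(* Twins, i.e. vertices at equal distance from every other vertex, can only be
   separated by the colour classes containing them, so a locating colouring is
   injective on each of A and B and needs at least t colours.  With exactly t
   colours, c maps each of the cliques A and B onto all colours; every vertex of
   such a clique is at distance 0 from its own class and 1 from all others, so
   the vertices of A and of B carrying the same colour get the same code. *)

From mathcomp Require Import all_boot all_order.
Import Order.TTheory.

Set Implicit Arguments.
Unset Strict Implicit.
Unset Printing Implicit Defensive.

Section Distances.
Variables (T : finType) (e : rel T).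

Lemma card_gt0_of (u : T) : 0 < #|T|.
Proof. by apply/card_gt0P; exists u. Qed.

Lemma dist_xx u : dist e u u = 0.
Proof.
rewrite /dist; have := card_gt0_of u; case: #|T| => // n _ /=.
by rewrite in_set1 eqxx.
Qed.

Lemma dist_eq0 u v : dist e u v = 0 -> v = u.
Proof.
rewrite /dist; have := card_gt0_of u; case: #|T| => // n _ /=.
by case: ifP => //; rewrite in_set1 => /eqP.
Qed.

Lemma dist_edge u v : e u v -> u != v -> dist e u v = 1.
Proof.
move=> euv neq_uv.
have card_gt1 : 1 < #|T|.
  by have := max_card (mem [set u; v]); rewrite cards2 neq_uv.
rewrite /dist; move: card_gt1; case: #|T| => // [] [] // n _ /=.
rewrite !inE eq_sym (negbTE neq_uv) /=; case: ifP => //.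
by move/negbT/existsP; case; exists u; rewrite inE eqxx euv.
Qed.

Lemma dist_set_le v (R : {set T}) x : x \in R -> dist_set e v R <= dist e v x.
Proof. exact: (@ge_bigmin_seq _ nat _ _ _ x _ _ (mem_index_enum x)). Qed.

Lemma dist_set_eq0 v (R : {set T}) : v \in R -> dist_set e v R = 0.
Proof. by move=> vR; apply/eqP; rewrite -leqn0 -(dist_xx v) dist_set_le. Qed.

Lemma dist_set_gt0 v (R : {set T}) : v \notin R -> 0 < dist_set e v R.
Proof.
move=> vNR; apply: (big_ind (fun n => 0 < n)) => [|m n|x xR].
- exact: card_gt0_of v.
- by rewrite leq_min => -> ->.
- by rewrite lt0n; apply: contraNneq vNR => /dist_eq0 <-.
Qed.

End Distances.

Section LocatingColorings.
Variables (T : finType) (e : rel T) (k : nat) (c : T -> 'I_k).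

Definition twins (w z : T) : Prop :=
  forall y, y != w -> y != z -> dist e w y = dist e z y.

Definition clique (S : {set T}) : Prop :=
  forall w z, w \in S -> z \in S -> w != z -> e w z.

Lemma rainbow_code_twins w z :
  twins w z -> c w = c z -> rainbow_code e c w = rainbow_code e c z.
Proof.
move=> twz cwz; apply/ffunP => i; rewrite !ffunE.
have [<-|ncwi] := eqVneq (c w) i; first by rewrite !dist_set_eq0 ?inE ?cwz.
apply: eq_bigr => x; rewrite inE => /eqP cxi.
apply: twz; apply: contraNneq ncwi => eq_x; first by rewrite -eq_x cxi.
by rewrite cwz -eq_x cxi.
Qed.

Lemma locating_inj_twins (S : {set T}) :
  locating_rainbow_coloring e c ->
  (forall w z, w \in S -> z \in S -> w != z -> twins w z) ->
  {in S &, injective c}.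
Proof.
move=> [_ loc] twS w z wS zS cwz; apply/eqP/negPn/negP => nwz.
by move/eqP: (loc w z nwz); apply; apply: rainbow_code_twins (twS w z _ _ _) _.
Qed.

Lemma imset_inj_full (S : {set T}) :
  {in S &, injective c} -> #|S| = k -> c @: S = [set: 'I_k].
Proof.
move=> injc cardS; apply/eqP.
by rewrite eqEcard subsetT cardsT card_ord (card_in_imset injc) cardS leqnn.
Qed.

Lemma rainbow_code_clique (S : {set T}) x :
  clique S -> c @: S = [set: 'I_k] -> x \in S ->
  rainbow_code e c x = [ffun i => nat_of_bool (c x != i)].
Proof.
move=> cliqueS fullS xS; apply/ffunP => i; rewrite !ffunE.
have [<-|ncxi] /= := eqVneq (c x) i; first by rewrite dist_set_eq0 ?inE.
have /imsetP[y yS eq_iy] : i \in c @: S by rewrite fullS inE.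
have nxy : x != y by apply: contraNneq ncxi => ->; rewrite eq_iy.
have cxNy : x \notin color_class c i by rewrite inE.
apply/eqP; rewrite eqn_leq dist_set_gt0 // andbT.
by rewrite -(dist_edge (cliqueS _ _ xS yS nxy) nxy) dist_set_le ?inE ?eq_iy.
Qed.

End LocatingColorings.

Theorem lemma3 (T : finType) (e : rel T) (A B : {set T}) (t : nat) :
  simple_graph e -> connected_graph e ->
  [disjoint A & B] -> #|A| = t -> #|B| = t ->
  (forall w z, w \in A -> z \in A -> w != z -> e w z) ->
  (forall w z, w \in B -> z \in B -> w != z -> e w z) ->
  (forall w z, w \in A -> z \in A -> w != z ->
     forall y, y != w -> y != z -> dist e w y = dist e z y) ->
  (forall w z, w \in B -> z \in B -> w != z ->
     forall y, y != w -> y != z -> dist e w y = dist e z y) ->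
  forall (k : nat) (c : T -> 'I_k), locating_rainbow_coloring e c -> t.+1 <= k.
Proof.
move=> _ [/card_gt0P[u _] _] dAB cardA cardB cliqueA cliqueB twA twB k c loc.
have injA := locating_inj_twins loc twA; have injB := locating_inj_twins loc twB.
have le_tk : t <= k.
  by have := max_card (mem (c @: A)); rewrite card_ord (card_in_imset injA) cardA.
rewrite ltn_neqAle le_tk andbT; apply/eqP => eq_tk; subst k.
have fullA := imset_inj_full injA cardA; have fullB := imset_inj_full injB cardB.
(* T is nonempty, so some colour exists even when t = 0. *)
have /imsetP[a aA ca] : c u \in c @: A by rewrite fullA inE.
have /imsetP[b bB cb] : c u \in c @: B by rewrite fullB inE.
have nab : a != b by apply: contraTneq bB => <-; rewrite (disjointFr dAB aA).
case: loc => _ /(_ a b nab)/eqP; apply.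
by rewrite (rainbow_code_clique cliqueA fullA aA)
  (rainbow_code_clique cliqueB fullB bB) -ca -cb.
Qed.
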